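(* Let $G$ be an abelian group, let $n\geq 0$, let $X\subseteq G$ be a finite, nonempty subset, let $S\in \mathcal F(G)$ be a sequence, and let $\mathscr A=A_1\cdot\ldots\cdot A_n$ be a setpartition with $\mathsf S(\mathscr A)\mid S$, $\mathrm{supp}(\mathsf S(\mathscr A)^{[-1]}\cdot S)\subseteq Z$, and $|A_i\setminus Z|\leq 1$ for all $i$, where $H\leq \mathsf H(X+\sum_{i=1}^{n}A_i)$ is a subgroup and $Z\subseteq G$ satisfies $Z=Z+H\subseteq \bigcap_{i=1}^n(A_i+H)$. Then: 1. $X+\Sigma_{n}(S)=X+\sum_{i=1}^{n}A_i$. 2. If $Z=g+H$ for some $g\in G$, then $X+\Sigma_{\ell}(S)=X+\sum_{i=1}^{n}A_i+(\ell-n)g$ for every $\ell\in [n,\,n+|\mathsf S(\mathscr A)^{[-1]}\cdot S|]$.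
   Context: A sequence over $G$ is a finite unordered list of elements of $G$ (element of the free abelian monoid $\mathcal F(G)$); $|S|$ is its length, $T\mid S$ means subsequence, $T^{[-1]}\cdot S$ is $S$ with the terms of $T$ removed, $\mathrm{supp}(S)$ is the set of elements occurring in $S$, $\sigma(T)$ is the sum of terms of $T$, and $\Sigma_\ell(S)=\{\sigma(T):T\mid S,\ |T|=\ell\}$. A setpartition is a sequence $\mathscr A=A_1\cdot\ldots\cdot A_n$ of finite nonempty subsets of $G$; $\mathsf S(\mathscr A)$ is the sequence of all elements of all $A_i$ (counted once per set containing it). $\mathsf H(A)=\{g:g+A=A\}$. Sumsets $A_1+\dots+A_n=\{a_1+\dots+a_n:a_i\in A_i\}$ (an empty sumset is $\{0\}$). *)

From HB Require Import structures.
From mathcomp Require Import all_boot all_order all_algebra.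
From mathcomp Require Import finmap.
Set Implicit Arguments. Unset Strict Implicit. Unset Printing Implicit Defensive.
Import GRing.Theory.
Local Open Scope ring_scope.

Section Defs.
Variable G : zmodType.

(* Sequences over G (elements of F(G)) are represented by seq G, considered
   up to permutation. T | S in F(G): multiset divisibility. *)
Definition msdiv (T S : seq G) : Prop :=
  forall x : G, (count_mem x T <= count_mem x S)%N.

Definition msminus (S T : seq G) : seq G := foldr (fun x s => rem x s) S T.

Definition sigma (T : seq G) : G := \sum_(t <- T) t.

Definition Sigma_l (l : nat) (S : seq G) (g : G) : Prop :=
  exists T : seq G, [/\ msdiv T S, size T = l & sigma T = g].

Definition seq_of_setpart (n : nat) (A : 'I_n -> {fset G}) : seq G :=
  flatten [seq enum_fset (A i) | i <- enum 'I_n].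

Definition sumsetXA (X : {fset G}) (n : nat) (A : 'I_n -> {fset G}) (g : G)
  : Prop :=
  exists2 x, x \in X &
    exists a : 'I_n -> G, (forall i, a i \in A i) /\ g = x + \sum_(i < n) a i.

Definition sumsetXSigma (X : {fset G}) (l : nat) (S : seq G) (g : G) : Prop :=
  exists2 x, x \in X & exists2 s, Sigma_l l S s & g = x + s.

Definition stab (B : G -> Prop) (g : G) : Prop :=
  (forall y, B y -> B (g + y)) /\ (forall y, B y -> exists2 z, B z & y = g + z).

Definition is_subgroup (H : G -> Prop) : Prop :=
  H 0 /\ (forall x y, H x -> H y -> H (x - y)).

End Defs.

(* Let T be a subsequence of S of length l >= n.  Its terms outside Z divide
   S(A) (the rest of S lies in Z), and since each A_i has at most one element
   outside Z, they can be assigned to distinct sets A_i.  Each remaining A_i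
   absorbs one term z of T in Z, written z = a_i + h with a_i in A_i, h in H.
   Hence sigma(T) = a_1 + ... + a_n + h + sigma(V) with h in H and V the
   l - n unused terms of T, all in Z; as H stabilises X + A_1 + ... + A_n,
   the shift by h is harmless.  If Z = g + H then sigma(V) lies in
   (l - n) g + H.  Conversely, a transversal of A followed by l - n terms of
   S(A)^[-1] S realises every element of X + A_1 + ... + A_n + (l - n) g,
   after shifting by an element of H. *)

From HB Require Import structures.
From mathcomp Require Import all_boot all_order all_algebra.
From mathcomp Require Import finmap zify boolp.
Set Implicit Arguments.
Unset Strict Implicit.
Unset Printing Implicit Defensive.
Import GRing.Theory.
Local Open Scope ring_scope.

Section Multisets.
Variable G : zmodType.
Implicit Types (x : G) (S T U : seq G).

Lemma msdiv_nil T : msdiv T [::] -> T = [::].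
Proof. by case: T => // x T /(_ x); rewrite /= eqxx. Qed.

Lemma msdiv_subseq T S : subseq T S -> msdiv T S.
Proof. by move=> sub_TS x; apply: leq_count_subseq. Qed.

Lemma msdiv_cat T1 T2 S1 S2 :
  msdiv T1 S1 -> msdiv T2 S2 -> msdiv (T1 ++ T2) (S1 ++ S2).
Proof. by move=> T1S1 T2S2 x; rewrite !count_cat leq_add. Qed.

Lemma msdiv_perm T S1 S2 : perm_eq S1 S2 -> msdiv T S1 <-> msdiv T S2.
Proof. by move=> /permP eqS; split=> TS x; rewrite ?eqS // -eqS. Qed.

Lemma count_msminus T S x : msdiv T S ->
  count_mem x (msminus S T) = (count_mem x S - count_mem x T)%N.
Proof.
elim: T x => [|t T IH] x /= tTS; first by rewrite subn0.
have TS : msdiv T S.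
  by move=> y; apply: leq_trans _ (tTS y); rewrite /= leq_addl.
have tST : t \in msminus S T.
  by rewrite -has_pred1 has_count IH //; have := tTS t; rewrite /= eqxx; lia.
by rewrite count_mem_rem IH //; case: (t == x) => /=; lia.
Qed.

Lemma perm_msminus T S : msdiv T S -> perm_eq S (T ++ msminus S T).
Proof.
move=> TS; apply/allP => x _ /=.
by rewrite count_cat count_msminus // subnKC.
Qed.

Lemma sigma_nil : sigma [::] = 0 :> G.
Proof. exact: big_nil. Qed.

Lemma sigma_cons x T : sigma (x :: T) = x + sigma T.
Proof. exact: big_cons. Qed.

Lemma sigma_cat T U : sigma (T ++ U) = sigma T + sigma U.
Proof. exact: big_cat. Qed.

Lemma perm_sigma T U : perm_eq T U -> sigma T = sigma U.
Proof. exact: perm_big. Qed.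

Lemma msdiv_fset_cat_cases (B : {fset G}) T S :
  msdiv T (enum_fset B ++ S) ->
  {in T &, forall a b, a \in B -> b \in B -> a = b} ->
  (exists2 t, t \in T & t \in B /\ msdiv (rem t T) S) \/ msdiv T S.
Proof.
move=> TBS TB1.
have [/hasP[t Tt Bt]|/hasPn TnB] := boolP (has (fun x => x \in B) T).
  left; exists t => //; split=> // x; have := TBS x.
  rewrite count_cat count_mem_rem (count_uniq_mem _ (fset_uniq B)).
  have [<-|tx] := eqVneq t x; first by rewrite Bt /=; lia.
  rewrite subn0; have [Bx|_] := boolP (x \in enum_fset B); last by [].
  have [Tx|/count_memPn->] := boolP (x \in T); last by [].
  by rewrite (TB1 _ _ Tt Tx Bt Bx) eqxx in tx.
right=> x; have := TBS x; rewrite count_cat.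
have [Tx|/count_memPn->] := boolP (x \in T); last by [].
by rewrite (count_memPn (TnB x Tx)).
Qed.

End Multisets.

Section Picks.
Variable G : zmodType.
Implicit Types (bs : seq G) (As : seq {fset G}).

Definition picks bs As := all2 (fun b (B : {fset G}) => b \in B) bs As.

Definition seq_of_fsets As : seq G := flatten (map (@enum_fset G) As).

Lemma size_picks bs As : picks bs As -> size bs = size As.
Proof. by rewrite /picks all2E => /andP[/eqP]. Qed.

Lemma nth_picks bs As : picks bs As -> forall i, (i < size As)%N ->
  nth 0 bs i \in nth fset0 As i.
Proof.
elim: bs As => [|b bs IH] [|B As] //= /andP[bB /IH bsAs] [|i] //; exact: bsAs.
Qed.

Lemma msdiv_picks bs As : picks bs As -> msdiv bs (seq_of_fsets As).
Proof.
elim: bs As => [|b bs IH] [|B As] //= /andP[bB /IH bsAs] x.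
rewrite count_cat (count_uniq_mem _ (fset_uniq B)) leq_add ?bsAs //.
by rewrite /=; have [<-|_] := eqVneq b x; rewrite ?bB.
Qed.

Lemma seq_of_setpartE n (A : 'I_n -> {fset G}) :
  seq_of_setpart A = seq_of_fsets (map A (enum 'I_n)).
Proof. by rewrite /seq_of_fsets -map_comp. Qed.

Lemma sumsetXAP (X : {fset G}) n (A : 'I_n -> {fset G}) y :
  sumsetXA X A y <->
  exists2 x, x \in X &
    exists2 bs, picks bs (map A (enum 'I_n)) & y = x + sigma bs.
Proof.
split=> [[x Xx [a [aA ->]]]|[x Xx [bs pick_bs ->]]]; exists x => //.
  exists (map a (enum 'I_n)); last by rewrite /sigma big_map big_enum.
  by elim: (enum 'I_n) => //= i s ->; rewrite aA.
have size_bs : size bs = n.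
  by rewrite (size_picks pick_bs) size_map size_enum_ord.
exists (nth 0 bs); split=> [i|].
  have lt_i : (i < size (map A (enum 'I_n)))%N.
    by rewrite size_map size_enum_ord.
  have := nth_picks pick_bs lt_i.
  by rewrite (nth_map i) ?size_enum_ord // nth_ord_enum.
by rewrite /sigma (big_nth 0) size_bs big_mkord.
Qed.

End Picks.

Section Absorption.
Variables (G : zmodType) (H Z : G -> Prop).
Hypothesis subH : is_subgroup H.
Implicit Types (P Q L V : seq G) (As : seq {fset G}) (B : {fset G}).

Lemma subgroup0 : H 0.
Proof. by case: subH. Qed.

Lemma subgroupN x : H x -> H (- x).
Proof. by case: subH => H0 HB Hx; rewrite -sub0r; apply: HB. Qed.

Lemma subgroupD x y : H x -> H y -> H (x + y).
Proof. by case: subH => _ HB Hx Hy; rewrite -[y]opprK; apply/HB/subgroupN. Qed.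

Definition outside_le1 (B : {fset G}) :=
  forall a b, a \in B -> b \in B -> ~ Z a -> ~ Z b -> a = b.

Definition covers (B : {fset G}) :=
  forall z, Z z -> exists a, exists2 h, a \in B /\ H h & z = a + h.

Lemma msdiv_outside_cases B P L :
  outside_le1 B -> {in P, forall p, ~ Z p} -> msdiv P (enum_fset B ++ L) ->
  (exists2 p, p \in P & p \in B /\ msdiv (rem p P) L) \/ msdiv P L.
Proof.
move=> B1 PZ /msdiv_fset_cat_cases; apply=> a b Pa Pb Ba Bb.
exact: B1 Ba Bb (PZ a Pa) (PZ b Pb).
Qed.

Lemma size_outside_le As P :
  {in As, forall B, outside_le1 B} -> {in P, forall p, ~ Z p} ->
  msdiv P (seq_of_fsets As) -> (size P <= size As)%N.
Proof.
elim: As P => [|B As IH] P AsB1 PZ; first by move/msdiv_nil->.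
have AsB1' : {in As, forall B, outside_le1 B}.
  by move=> B' AsB'; apply: AsB1; rewrite inE AsB' orbT.
have B1 := AsB1 B (mem_head B As).
case/(msdiv_outside_cases B1 PZ) => [[p Pp [_ PAs]]|PAs].
  have PZ' : {in rem p P, forall p, ~ Z p} by move=> q /mem_rem; apply: PZ.
  by have := IH _ AsB1' PZ' PAs; rewrite size_rem //=; lia.
exact/leqW/IH.
Qed.

Lemma absorb_split As P Q :
  {in As, forall B, outside_le1 B} -> {in As, forall B, covers B} ->
  {in P, forall p, ~ Z p} -> {in Q, forall q, Z q} ->
  msdiv P (seq_of_fsets As) -> (size As <= size P + size Q)%N ->
  exists bs V h, [/\ picks bs As, H h, {in V, forall v, Z v},
    size V = (size P + size Q - size As)%N &
    sigma P + sigma Q = h + sigma bs + sigma V].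
Proof.
elim: As P Q => [|B As IH] P Q AsB1 AsZ PZ QZ PAs leAs.
  exists [::], Q, 0; split=> //; first exact: subgroup0.
    by rewrite (msdiv_nil PAs) subn0.
  by rewrite (msdiv_nil PAs) !sigma_nil !add0r.
have AsB1' : {in As, forall B, outside_le1 B}.
  by move=> B' AsB'; apply: AsB1; rewrite inE AsB' orbT.
have AsZ' : {in As, forall B, covers B}.
  by move=> B' AsB'; apply: AsZ; rewrite inE AsB' orbT.
have B1 := AsB1 B (mem_head B As).
case/(msdiv_outside_cases B1 PZ): PAs => [[p Pp [Bp PAs]]|PAs].
  have PZ' : {in rem p P, forall p, ~ Z p} by move=> q /mem_rem; apply: PZ.
  have P_gt0 : (0 < size P)%N by case: (P) Pp.
  have [|bs [V [h [pick_bs Hh VZ sizeV eqs]]]] := IH _ Q AsB1' AsZ' PZ' QZ PAs.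
    by move: leAs; rewrite size_rem //=; lia.
  exists (p :: bs), V, h; split=> //=; first by rewrite Bp.
    by rewrite sizeV size_rem //=; lia.
  rewrite (perm_sigma (perm_to_rem Pp)) !sigma_cons -[LHS]addrA eqs.
  by rewrite !addrA (addrC p h).
case: Q QZ leAs => [|q Q] QZ leAs.
  by have := size_outside_le AsB1' PZ PAs; move: leAs => /=; lia.
have QZ' : {in Q, forall q, Z q}.
  by move=> q' Qq'; apply: QZ; rewrite inE Qq' orbT.
have [a [h' [Ba Hh'] eq_q]] := AsZ B (mem_head B As) q (QZ q (mem_head q Q)).
have [|bs [V [h [pick_bs Hh VZ sizeV eqs]]]] := IH P Q AsB1' AsZ' PZ QZ' PAs.
  by move: leAs => /=; lia.
exists (a :: bs), V, (h' + h); split=> //=; first by rewrite Ba.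
- exact: subgroupD.
- by rewrite sizeV; lia.
rewrite !sigma_cons eq_q addrCA eqs !addrA; congr (_ + _ + _).
by rewrite [RHS]addrC addrA.
Qed.

Lemma absorb_sigma As R T :
  {in As, forall B, outside_le1 B} -> {in As, forall B, covers B} ->
  {in R, forall r, Z r} -> msdiv T (seq_of_fsets As ++ R) ->
  (size As <= size T)%N ->
  exists bs V h, [/\ picks bs As, H h, {in V, forall v, Z v},
    size V = (size T - size As)%N & sigma T = h + sigma bs + sigma V].
Proof.
move=> AsB1 AsZ RZ TAsR leAs; pose inZ x := `[< Z x >].
have permT : perm_eq T ([seq t <- T | ~~ inZ t] ++ [seq t <- T | inZ t]).
  by rewrite perm_sym perm_catC perm_filterC.
set P := [seq t <- T | _] in permT; set Q := [seq t <- T | _] in permT.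
have PZ : {in P, forall p, ~ Z p}.
  by move=> p; rewrite mem_filter => /andP[/asboolPn].
have QZ : {in Q, forall q, Z q}.
  by move=> q; rewrite mem_filter => /andP[/asboolP].
have PAs : msdiv P (seq_of_fsets As).
  move=> x; have [Zx|nZx] := asboolP (Z x).
    rewrite (count_memPn _) // mem_filter.
    by apply/nandP; left; apply/negPn/asboolP.
  have xR : x \notin R by apply/negP => /RZ.
  apply: leq_trans (leq_count_subseq _ (filter_subseq _ _)) _.
  by have := TAsR x; rewrite count_cat (count_memPn xR) addn0.
rewrite (perm_size permT) size_cat in leAs *.
rewrite (perm_sigma permT) sigma_cat.
exact: absorb_split.
Qed.

Lemma sigma_coset g V : (forall z, Z z <-> exists2 h, H h & z = g + h) ->
  {in V, forall v, Z v} -> exists2 h, H h & sigma V = g *+ size V + h.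
Proof.
move=> Zg; elim: V => [|v V IH] VZ.
  by exists 0; rewrite ?sigma_nil ?addr0 //; exact: subgroup0.
have [hv Hhv ->] := (Zg v).1 (VZ v (mem_head v V)).
have [|h Hh eqV] := IH.
  by move=> x Vx; apply: VZ; rewrite inE Vx orbT.
exists (hv + h); first exact: subgroupD.
by rewrite sigma_cons eqV mulrS !addrA; congr (_ + _); rewrite addrAC.
Qed.

End Absorption.

Section SumsetSigma.
Variables (G : zmodType) (n : nat) (X : {fset G}) (S : seq G).
Variables (A : 'I_n -> {fset G}) (H Z : G -> Prop).
Hypothesis subH : is_subgroup H.
Hypothesis stabH : forall h, H h -> stab (sumsetXA X A) h.
Hypothesis coverA :
  forall z, Z z -> forall i, exists a, exists2 h, a \in A i /\ H h & z = a + h.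
Hypothesis divS : msdiv (seq_of_setpart A) S.
Hypothesis remZ : forall x, x \in msminus S (seq_of_setpart A) -> Z x.
Hypothesis outA :
  forall i a b, a \in A i -> b \in A i -> ~ Z a -> ~ Z b -> a = b.

Local Notation R := (msminus S (seq_of_setpart A)).

Lemma sumsetXSigma_absorb l y : (n <= l)%N -> sumsetXSigma X l S y ->
  exists w V, [/\ sumsetXA X A w, {in V, forall v, Z v},
    size V = (l - n)%N & y = w + sigma V].
Proof.
move=> le_nl [x Xx [s [T [TS sizeT <-]] ->]].
have TAsR : msdiv T (seq_of_fsets (map A (enum 'I_n)) ++ R).
  by rewrite -seq_of_setpartE; apply/(msdiv_perm _ (perm_msminus divS)).
have AsB1 : {in map A (enum 'I_n), forall B, outside_le1 Z B}.
  by move=> B /mapP[i _ ->]; exact: outA.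
have AsZ : {in map A (enum 'I_n), forall B, covers H Z B}.
  by move=> B /mapP[i _ ->] z /coverA.
have [|bs [V [h [pick_bs Hh VZ sizeV eqT]]]] :=
  absorb_sigma subH AsB1 AsZ remZ TAsR.
  by rewrite size_map size_enum_ord sizeT.
exists (h + (x + sigma bs)), V; split=> //.
- by apply: (stabH Hh).1; apply/sumsetXAP; exists x => //; exists bs.
- by rewrite sizeV sizeT size_map size_enum_ord.
by rewrite eqT !addrA (addrC x h).
Qed.

Lemma sumsetXA_extend w U : sumsetXA X A w -> msdiv U R ->
  sumsetXSigma X (n + size U) S (w + sigma U).
Proof.
case/sumsetXAP=> x Xx [bs pick_bs ->] UR; exists x => //.
exists (sigma (bs ++ U)); last by rewrite sigma_cat addrA.
exists (bs ++ U); split=> //.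
- apply/(msdiv_perm _ (perm_msminus divS)); apply: msdiv_cat UR.
  by rewrite seq_of_setpartE; exact: msdiv_picks.
- by rewrite size_cat (size_picks pick_bs) size_map size_enum_ord.
Qed.

End SumsetSigma.

Theorem lemma2p4 (G : zmodType) (n : nat) (X : {fset G}) (S : seq G)
    (A : 'I_n -> {fset G}) (H Z : G -> Prop) :
  X != fset0 ->
  (forall i, A i != fset0) ->
  is_subgroup H ->
  (forall h, H h -> stab (sumsetXA X A) h) ->
  (forall z, Z z <-> exists z', exists2 h, Z z' /\ H h & z = z' + h) ->
  (forall z, Z z -> forall i, exists a, exists2 h, a \in A i /\ H h & z = a + h) ->
  msdiv (seq_of_setpart A) S ->
  (forall x, x \in msminus S (seq_of_setpart A) -> Z x) ->
  (forall i a b, a \in A i -> b \in A i -> ~ Z a -> ~ Z b -> a = b) ->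
  (forall y, sumsetXSigma X n S y <-> sumsetXA X A y) /\
  (forall g, (forall z, Z z <-> exists2 h, H h & z = g + h) ->
     forall l, (n <= l <= n + size (msminus S (seq_of_setpart A)))%N ->
       forall y, sumsetXSigma X l S y <->
         exists2 w, sumsetXA X A w & y = w + g *+ (l - n)).
Proof.
move=> _ _ subH stabH _ coverA divS remZ outA.
have absorb := sumsetXSigma_absorb subH stabH coverA divS remZ outA.
have extend := sumsetXA_extend (X := X) divS.
split=> [y|g Zg l /andP[le_nl le_l] y]; split.
- case/(absorb _ _ (leqnn n))=> w [V [Aw _ /eqP]].
  by rewrite subnn size_eq0 => /eqP-> ->; rewrite sigma_nil addr0.
- move=> Ay; have := extend _ _ Ay (msdiv_subseq (sub0seq _)).
  by rewrite addn0 sigma_nil addr0.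
- case/(absorb _ _ le_nl)=> w [V [Aw VZ sizeV ->]].
  have [h Hh ->] := sigma_coset subH Zg VZ.
  exists (h + w); first exact: (stabH _ Hh).1 _ Aw.
  by rewrite sizeV addrCA addrC (addrC w).
case=> w Aw ->; set k := (l - n)%N.
have RZ : {in take k (msminus S (seq_of_setpart A)), forall r, Z r}.
  by move=> r /mem_take; exact: remZ.
have [h Hh sigmaU] := sigma_coset subH Zg RZ.
have Aw' := (stabH _ (subgroupN subH Hh)).1 _ Aw.
have := extend _ _ Aw' (msdiv_subseq (take_subseq _ k)).
have le_kR : (k <= size (msminus S (seq_of_setpart A)))%N by rewrite /k; lia.
rewrite sigmaU size_takel // /k subnKC //.
by rewrite (addrC _ h) addrA (addrAC (- h)) addNr add0r.
Qed.
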